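(* Let $\theta>-1$, $\beta>0$, and let $\mathscr{L}_i^{(\theta,\beta)}$, $i=0,1,2,\dots$, denote the generalized Laguerre polynomials $$\mathscr{L}_i^{(\theta,\beta)}(x)=\frac{1}{i!}x^{-\theta}e^{\beta x}\frac{d^i}{dx^i}\big(x^{i+\theta}e^{-\beta x}\big).$$ Let $n$ be a positive integer and $\varrho:(0,\infty)\to\mathbb{R}$ with $n-1<\varrho_{\min}<\varrho(x)<\varrho_{\max}<n$ for all $x>0$. For a sufficiently smooth function $u$ on $[0,\infty)$ define the variable-order Caputo derivative $${}_0^{C}\mathscr{D}_x^{\varrho(x)}u(x)=\frac{1}{\Gamma(n-\varrho(x))}\int_0^x (x-t)^{n-\varrho(x)-1}u^{(n)}(t)\,dt,$$ and for a function $\mu:(0,\infty)\to(0,\infty)$, $\alpha>-1$ and $k\ge0$ let $$\hat{\mathscr{L}}_k^{(\mu(x),\alpha,\beta)}(x)=\frac{1}{\Gamma(\mu(x))}\int_0^x (x-t)^{\mu(x)-1}\mathscr{L}_k^{(\alpha,\beta)}(t)\,dt .$$ Then for every $N\ge0$ and real coefficients $\ell_0,\dots,\ell_N$, the polynomial $u_N=\sum_{i=0}^N \ell_i\mathscr{L}_i^{(\theta,\beta)}$ satisfies, for all $x>0$, $${}_0^{C}\mathscr{D}_x^{\varrho(x)}u_N(x)=\sum_{i=0}^N \ell_i\,D_{i,n,\theta,\beta}^{(\varrho(x))}(x),$$ where $D_{i,n,\theta,\beta}^{(\varrho(x))}(x)=0$ for $0\le i\le n-1$ and $$D_{i,n,\theta,\beta}^{(\varrho(x))}(x)=(-\beta)^n\,\hat{\mathscr{L}}_{i-n}^{(n-\varrho(x),\theta+n,\beta)}(x)\quad\text{for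 } i\ge n.$$
   Context: Here the fractional order $\varrho(x)$ (resp. $\mu(x)$) is frozen at the outer variable $x$ inside the integral. The generalized Laguerre polynomials are orthogonal on $(0,\infty)$ with respect to the weight $x^\theta e^{-\beta x}$. *)

From HB Require Import structures.
From mathcomp Require Import all_boot all_order all_algebra.
From mathcomp Require Import all_classical all_reals all_analysis.
Set Implicit Arguments. Unset Strict Implicit. Unset Printing Implicit Defensive.
Import Order.TTheory GRing.Theory Num.Theory.
Local Open Scope classical_set_scope.
Local Open Scope ring_scope.

Section Defs.
Variable R : realType.

Definition Gamma (s : R) : R :=
  \int[lebesgue_measure]_(t in `]0%R, +oo[) (powR t (s - 1) * expR (- t)).

Definition Laguerre (theta beta : R) (i : nat) (x : R) : R :=
  (i`!%:R)^-1 * powR x (- theta) * expR (beta * x) *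
  derive1n i (fun y : R => powR y (i%:R + theta) * expR (- (beta * y))) x.

Definition caputo (n : nat) (rho : R -> R) (u : R -> R) (x : R) : R :=
  (Gamma (n%:R - rho x))^-1 *
  \int[lebesgue_measure]_(t in `[0%R, x]) (powR (x - t) (n%:R - rho x - 1) * derive1n n u t).

Definition hatLaguerre (mu : R -> R) (alpha beta : R) (k : nat) (x : R) : R :=
  (Gamma (mu x))^-1 *
  \int[lebesgue_measure]_(t in `[0%R, x]) (powR (x - t) (mu x - 1) * Laguerre alpha beta k t).

Definition Dcoef (n : nat) (theta beta : R) (rho : R -> R) (i : nat) (x : R) : R :=
  if (i < n)%N then 0
  else (- beta) ^+ n * hatLaguerre (fun y => n%:R - rho y) (theta + n%:R) beta (i - n) x.

End Defs.

(* On (0, oo) the Rodrigues formula gives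
   d^m/dy^m (y^c e^(-b y)) = y^(c-m) e^(-b y) P_m^(c)(y) for polynomials P_m^(c)
   with (P_(m+1)^(c))' = -b (m+1) P_m^(c), so L_i^(theta,beta) = P_i^(i+theta)/i!
   and its n-th derivative is (-beta)^n L_(i-n)^(theta+n,beta) for i >= n and 0
   for i < n.  The kernel (x-t)^(n-rho(x)-1) has exponent > -1, hence is
   integrable on (0, x], and so is its product with any polynomial; the Caputo
   integral therefore splits term by term. *)

From HB Require Import structures.
From mathcomp Require Import all_boot all_order all_algebra.
From mathcomp Require Import all_classical all_reals all_analysis.
From mathcomp Require Import ring lra measurable_realfun.
Import Order.TTheory GRing.Theory Num.Theory numFieldNormedType.Exports.
Local Open Scope ring_scope.

Section rodrigues_poly.
Variables (R : comNzRingType) (c b : R).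

(* Differentiating y^(c-m) e^(-b y) P(y) gives
   y^(c-m-1) e^(-b y) ((c-m) P - b y P + y P'). *)
Fixpoint rodrigues_poly (m : nat) : {poly R} :=
  if m is m'.+1 then
    (c - m'%:R)%:P * rodrigues_poly m' - (b%:P * 'X) * rodrigues_poly m'
    + 'X * (rodrigues_poly m')^`()
  else 1.

Lemma deriv_rodrigues_poly m :
  (rodrigues_poly m.+1)^`() = (- b * m.+1%:R) *: rodrigues_poly m.
Proof.
rewrite -mul_polyC; elim: m => [|m IH].
  rewrite /= !mulr1 derivC mulr0 addr0 derivB derivC derivM derivC derivX.
  by rewrite mul0r !add0r mulr1 polyCN.
have -> : rodrigues_poly m.+2 = (c - m.+1%:R)%:P * rodrigues_poly m.+1
    - (b%:P * 'X) * rodrigues_poly m.+1 + 'X * (rodrigues_poly m.+1)^`() by [].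
have E : rodrigues_poly m.+1 = (c - m%:R)%:P * rodrigues_poly m
    - (b%:P * 'X) * rodrigues_poly m + 'X * (rodrigues_poly m)^`() by [].
move: (rodrigues_poly m.+1) (rodrigues_poly m) IH E => q1 q0 IH E.
rewrite !(derivD, derivN, derivB, derivM, derivC, derivX) IH !(derivM, derivC) E.
rewrite !polyCM !polyCN !polyCB -!natr1 !polyCD.
ring.
Qed.

Lemma derivn_rodrigues_poly j k :
  (rodrigues_poly (j + k))^`(k) = ((- b) ^+ k * ((j + k) ^_ k)%:R) *: rodrigues_poly j.
Proof.
elim: k => [|k IH]; first by rewrite addn0 derivn0 ffactn0 mulr1 expr0 scale1r.
rewrite addnS derivSn deriv_rodrigues_poly derivnZ IH scalerA ffactSS natrM exprS.
by congr (_ *: _); ring.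
Qed.

Lemma derivn_rodrigues_poly_eq0 i k : (i < k)%N -> (rodrigues_poly i)^`(k) = 0.
Proof.
move=> ik; have := derivn_rodrigues_poly 0 i; rewrite add0n => Di.
rewrite -(subnK (ltnW ik)) /derivn iterD -[iter i _ _]/(derivn i _) Di.
rewrite -[iter (k - i) _ _]/(derivn (k - i) _) derivnZ.
by rewrite derivn_poly0 ?scaler0 // size_poly1 subn_gt0.
Qed.
End rodrigues_poly.
Arguments rodrigues_poly {R}.

Section laguerre_poly.
Variable R : numFieldType.

Definition laguerre_poly (th b : R) (i : nat) : {poly R} :=
  (i`!%:R)^-1 *: rodrigues_poly (i%:R + th) b i.

Lemma derivn_laguerre_poly th b n i : (laguerre_poly th b i)^`(n) =
  if (i < n)%N then 0 else (- b) ^+ n *: laguerre_poly (th + n%:R) b (i - n).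
Proof.
rewrite /laguerre_poly derivnZ; case: ltnP => [ilt|nle].
  by rewrite derivn_rodrigues_poly_eq0 ?scaler0.
have := @derivn_rodrigues_poly _ (i%:R + th) b (i - n) n; rewrite subnK // => ->.
have -> : (i - n)%:R + (th + n%:R) = i%:R + th :> R by rewrite natrB //; ring.
rewrite !scalerA.
congr (_ *: _).
have /(congr1 (GRing.natmul (1 : R))) := ffact_fact nle; rewrite natrM => <-.
have h1 : (i ^_ n)%:R != 0 :> R by rewrite pnatr_eq0 -lt0n ffact_gt0.
have h2 : ((i - n)`!)%:R != 0 :> R by rewrite pnatr_eq0 -lt0n fact_gt0.
by field; rewrite h1 h2.
Qed.
End laguerre_poly.
Arguments laguerre_poly {R}.

Section laguerre_functions.
Variable R : realType.

Lemma is_derive_expR_linear (b y : R) :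
  is_derive y 1 (fun z : R => expR (- (b * z))) (expR (- (b * y)) * - b).
Proof.
have Dlin : is_derive y 1 (fun z : R => - (b * z)) (- b).
  have := is_deriveN (is_deriveZ b (is_derive_id y (1 : R))).
  by rewrite /GRing.scale /= mulr1.
exact: (is_derive1_comp (is_derive_expR _) Dlin).
Qed.

Lemma derive1n_powR_expR (c b : R) m y : 0 < y ->
  derive1n m (fun z => z `^ c * expR (- (b * z))) y =
  y `^ (c - m%:R) * expR (- (b * y)) * (rodrigues_poly c b m).[y].
Proof.
elim: m y => [|m IH] y y0; first by rewrite derive1n0 subr0 /= hornerE mulr1.
rewrite derive1nS derive1E.
pose H := (fun z => z `^ (c - m%:R)) * (fun z => expR (- (b * z))) *
  horner (rodrigues_poly c b m).
have -> : 'D_1 (derive1n m (fun z => z `^ c * expR (- (b * z)))) y = 'D_1 H y.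
  apply: near_eq_derive; near=> z; rewrite IH //; near: z; exact: lt_nbhsr.
have D := is_deriveM (is_deriveM (is_derive1_powR (c - m%:R) y0)
  (is_derive_expR_linear b y)) (is_derive_poly (rodrigues_poly c b m) y).
rewrite (@derive_val _ _ _ _ _ _ _ D) /=.
have Ey : y `^ (c - m%:R) = y `^ (c - m.+1%:R) * y.
  have -> : c - m%:R = (c - m.+1%:R) + 1 by rewrite -natr1; ring.
  by rewrite powRD ?(powRr1 (ltW y0)) // (gt_eqF y0) implybT.
have -> : c - m%:R - 1 = c - m.+1%:R by rewrite -natr1; ring.
rewrite !hornerE /= -[(_ * _) y]/(y `^ (c - m%:R) * expR (- (b * y))) Ey.
rewrite /GRing.scale /=; ring.
Unshelve. all: end_near.
Qed.

Lemma Laguerre_horner (th b : R) i t :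
  0 < t -> Laguerre th b i t = (laguerre_poly th b i).[t].
Proof.
move=> t0; rewrite /Laguerre derive1n_powR_expR // hornerZ.
have -> : i%:R + th - i%:R = th by ring.
have e1 : expR (b * t) * expR (- (b * t)) = 1 by rewrite -expRD subrr expR0.
have e2 : t `^ (- th) * t `^ th = 1.
  by rewrite -powRD ?addNr ?powRr0 // (gt_eqF t0) implybT.
set q := _.[t].
transitivity (i`!%:R^-1 * (expR (b * t) * expR (- (b * t))) * (t `^ (- th) * t `^ th) * q).
  ring.
by rewrite e1 e2 !mulr1.
Qed.

Lemma derive1n_horner (f : R -> R) (p : {poly R}) m t :
  (forall s, 0 < s -> f s = p.[s]) -> 0 < t -> derive1n m f t = (p^`(m)).[t].
Proof.
move=> fp; elim: m t => [|m IH] t t0; first by rewrite derive1n0 derivn0 fp.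
rewrite derive1nS derive1E derivnS.
have -> : 'D_1 (derive1n m f) t = 'D_1 (horner p^`(m)) t.
  apply: near_eq_derive; near=> s; rewrite IH //; near: s; exact: lt_nbhsr.
exact: (@derive_val _ _ _ _ _ _ _ (is_derive_poly _ _)).
Unshelve. all: end_near.
Qed.

Lemma derive1n_Laguerre_sum (th b : R) n N (l : nat -> R) t : 0 < t ->
  derive1n n (fun y => \sum_(i < N) l i * Laguerre th b i y) t =
  \sum_(i < N) (l i * if (i < n)%N then 0 else (- b) ^+ n) *
                Laguerre (th + n%:R) b (i - n) t.
Proof.
move=> t0; pose p := \sum_(i < N) l i *: laguerre_poly th b i.
rewrite (@derive1n_horner _ p) //; last first.
  move=> s s0; rewrite horner_sum; apply: eq_bigr => i _.
  by rewrite hornerZ Laguerre_horner.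
rewrite raddf_sum horner_sum; apply: eq_bigr => i _.
rewrite /= derivnZ derivn_laguerre_poly hornerZ.
case: ltnP => _; first by rewrite horner0 !mulr0 mul0r.
by rewrite hornerZ -Laguerre_horner // mulrA.
Qed.
End laguerre_functions.

Local Open Scope classical_set_scope.

Section Rintegral_sum.
Context d (T : measurableType d) (R : realType) (mu : {measure set T -> \bar R}).

Lemma Rintegral_sum (D : set T) (I : Type) (s : seq I) (F : I -> T -> R) :
  measurable D -> (forall i, mu.-integrable D (EFin \o F i)) ->
  \int[mu]_(x in D) (\sum_(i <- s) F i x) = \sum_(i <- s) \int[mu]_(x in D) F i x.
Proof.
move=> mD iF; elim: s => [|i s IH].
  under eq_Rintegral do rewrite big_nil.
  by rewrite -[fun _ => 0]/(cst 0) Rintegral_cst // mul0r big_nil.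
have iS : mu.-integrable D (EFin \o fun x => \sum_(j <- s) F j x).
  have -> : EFin \o (fun x => \sum_(j <- s) F j x) = fun x => \sum_(j <- s) (EFin \o F j) x.
    by apply/funext => x; rewrite /= sumEFin.
  exact: integrable_sum.
under eq_Rintegral do rewrite big_cons.
by rewrite RintegralD // IH big_cons.
Qed.
End Rintegral_sum.

Section powR_kernel.
Variable R : realType.
Notation mu := (@lebesgue_measure R).

Lemma is_derive1_continuous (f : R -> R) (t df : R) :
  is_derive t 1 f df -> {for t, continuous f}.
Proof. by move=> [fd _]; apply: differentiable_continuous; exact/derivable1_diffP. Qed.

Lemma is_derive_powR_sub (x a t : R) : t < x ->
  is_derive t 1 (fun s => (x - s) `^ a) (- (a * (x - t) `^ (a - 1))).
Proof.
move=> tx; rewrite -subr_gt0 in tx.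
have Dsub : is_derive t (1 : R) (fun s => x - s) (- 1).
  by have := is_deriveB (is_derive_cst x t (1 : R)) (is_derive_id t (1 : R)); rewrite sub0r.
have := @is_derive1_comp _ (@powR R ^~ a) (fun s => x - s) t _ _
  (is_derive1_powR a tx) Dsub.
by rewrite mulrN1.
Qed.

Lemma measurable_powR_sub (x a : R) (D : set R) :
  measurable_fun D (fun t => (x - t) `^ a).
Proof.
by apply: (@measurableT_comp _ _ _ _ _ _ (@powR R ^~ a)) => //; exact: measurable_funB.
Qed.

Lemma is_derive_powR_sub_primitive (x a t : R) : a + 1 != 0 -> t < x ->
  is_derive t 1 (fun s => - (a + 1)^-1 * (x - s) `^ (a + 1)) ((x - t) `^ a).
Proof.
move=> a1 tx; have := is_deriveZ (- (a + 1)^-1) (is_derive_powR_sub x (a + 1) t tx).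
rewrite /GRing.scale /= addrK => D.
by apply: (is_derive_eq D); rewrite mulrN mulNr opprK mulrA mulVf ?mul1r.
Qed.

Lemma integral_powR_sub (x a c : R) : a + 1 != 0 -> 0 < c -> c < x ->
  (\int[mu]_(t in `[0%R, c]) ((x - t) `^ a)%:E
   = ((x `^ (a + 1) - (x - c) `^ (a + 1)) / (a + 1))%:E)%E.
Proof.
move=> a1 c0 cx; have ltx t : t <= c -> t < x by move=> tc; exact: le_lt_trans cx.
have DF t := @is_derive_powR_sub_primitive x a t a1.
rewrite (@continuous_FTC2 _ _ (fun s => - (a + 1)^-1 * (x - s) `^ (a + 1))) //.
- by rewrite -EFinB subr0; congr (_%:E); ring.
- apply: derivable_within_continuous => t; rewrite in_itv /= => /andP[_ /ltx tx].
  by have [] := is_derive_powR_sub x a t tx.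
- split.
  + by move=> t; rewrite in_itv /= => /andP[_ /ltW /ltx tx]; have [] := DF t tx.
  + apply: cvg_at_right_filter; exact: is_derive1_continuous (DF 0 (ltx 0 (ltW c0))).
  + apply: cvg_at_left_filter; exact: is_derive1_continuous (DF c cx).
- move=> t; rewrite in_itv /= => /andP[_ /ltW /ltx tx].
  by rewrite derive1E (@derive_val _ _ _ _ _ _ _ (DF t tx)).
Qed.

Lemma integral_powR_sub_le (x a c : R) : -1 < a -> c < x ->
  (\int[mu]_(t in `]0%R, c]) ((x - t) `^ a)%:E <= (x `^ (a + 1) / (a + 1))%:E)%E.
Proof.
move=> a1 cx; have a10 : 0 < a + 1 by rewrite -ltrBlDr sub0r.
have bound_ge0 : 0 <= x `^ (a + 1) / (a + 1) by rewrite divr_ge0 ?powR_ge0 ?ltW.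
have [c0|c0] := leP c 0.
  by rewrite set_itv_ge ?integral_set0 ?lee_fin // bnd_simp -leNgt.
rewrite integral_itv_obnd_cbnd; last by apply/measurable_EFinP; exact: measurable_powR_sub.
rewrite integral_powR_sub ?gt_eqF // lee_fin ler_wpM2r ?invr_ge0 ?(ltW a10) //.
by rewrite gerBl powR_ge0.
Qed.

Lemma integrable_powR_sub (x a : R) : -1 < a ->
  mu.-integrable `]0%R, x] (EFin \o fun t => (x - t) `^ a).
Proof.
move=> a1; have mK D : measurable_fun D (EFin \o fun t => (x - t) `^ a).
  by apply/measurable_EFinP; exact: measurable_powR_sub.
apply/integrableP; split; first exact: mK.
under eq_integral => t _ do rewrite gee0_abs ?lee_fin ?powR_ge0 //.
(* exhaust ]0, x[ by the ]0, x - 1/(k+1)] and use the primitive as a uniform bound *)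
rewrite -integral_itv_bndo_bndc // itv_bnd_open_bigcup.
pose F n := `]0%R, x - n.+1%:R^-1].
have nndF : nondecreasing_seq F.
  move=> i j ij; rewrite subsetEset; apply: subset_itvl.
  by rewrite bnd_simp lerD2l lerN2 lef_pV2 ?posrE // ler_nat ltnS.
have cvgF := ge0_nondecreasing_set_cvg_integral (mu := mu) nndF (fun=> measurable_itv _)
  (fun i => mK (F i)) (fun i t _ => powR_ge0 (x - t) a).
rewrite -(cvg_lim _ cvgF) //; apply: (@le_lt_trans _ _ (x `^ (a + 1) / (a + 1))%:E).
  apply: lime_le; first by apply/cvg_ex; eexists; exact: cvgF.
  by apply: nearW => k; apply: integral_powR_sub_le; rewrite // gtrBl invr_gt0.
exact: ltry.
Qed.

Lemma integrable_powR_subM (x a : R) (g : R -> R) (p : {poly R}) : 0 < x -> -1 < a ->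
  (forall t, 0 < t -> g t = p.[t]) ->
  mu.-integrable `]0%R, x] (EFin \o fun t => (x - t) `^ a * g t).
Proof.
move=> x0 a1 gp.
have [|tM _ maxM] := @EVT_max R (fun t => `|p.[t]|) 0 x (ltW x0).
  by apply: continuous_subspace_itv => t _; apply: cvg_norm; exact: continuous_horner.
apply: (@le_integrable _ _ _ mu _ (measurable_itv _) _
  (fun t => `|p.[tM]|%:E * ((x - t) `^ a)%:E)%E).
- apply/measurable_EFinP; apply: measurable_funM; first exact: measurable_powR_sub.
  apply: (eq_measurable_fun (horner p)); last exact: measurable_poly.
  by move=> t; rewrite inE /= in_itv /= => /andP[t0 _]; rewrite gp.
- move=> t; rewrite /= in_itv /= => /andP[t0 tx].
  rewrite lee_fin !normrM (ger0_norm (powR_ge0 _ _)) (ger0_norm (normr_ge0 _)).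
  by rewrite mulrC ler_wpM2r ?powR_ge0 // gp // maxM // in_itv /= (ltW t0) tx.
- exact/integrableZl/integrable_powR_sub.
Qed.

Lemma Rintegral_powR_sub_lincomb (x a : R) (f : R -> R) N (c : nat -> R)
    (g : nat -> R -> R) (p : nat -> {poly R}) :
  0 < x -> -1 < a -> (forall i t, 0 < t -> g i t = (p i).[t]) ->
  (forall t, 0 < t -> f t = \sum_(i < N) c i * g i t) ->
  \int[mu]_(t in `[0%R, x]) ((x - t) `^ a * f t)
  = \sum_(i < N) c i * \int[mu]_(t in `[0%R, x]) ((x - t) `^ a * g i t).
Proof.
move=> x0 a1 gp fg.
have fp t : 0 < t -> f t = (\sum_(i < N) c i *: p i).[t].
  by move=> t0; rewrite fg // horner_sum; apply: eq_bigr => i _; rewrite hornerZ gp.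
have cgp i t : 0 < t -> c i * g i t = (c i *: p i).[t] by move=> t0; rewrite hornerZ gp.
rewrite -Rintegral_itv_obnd_cbnd; last exact: integrable_powR_subM fp.
transitivity (\int[mu]_(t in `]0%R, x]) \sum_(i < N) (x - t) `^ a * (c i * g i t)).
  apply: eq_Rintegral => t; rewrite inE /= in_itv /= => /andP[t0 _].
  by rewrite fg // mulr_sumr.
rewrite Rintegral_sum //; last by move=> i; exact: integrable_powR_subM (cgp i).
apply: eq_bigr => i _.
rewrite -Rintegral_itv_obnd_cbnd; last exact: integrable_powR_subM (gp i).
rewrite -RintegralZl //; last exact: integrable_powR_subM (gp i).
by apply: eq_Rintegral => t _; rewrite mulrCA.
Qed.
End powR_kernel.

Theorem mainTheorem2 (R : realType) (theta beta : R) (n : nat)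
  (rho : R -> R) (rho_min rho_max : R) :
  -1 < theta -> 0 < beta -> (0 < n)%N ->
  n%:R - 1 < rho_min -> rho_max < n%:R ->
  (forall x : R, 0 < x -> rho_min < rho x /\ rho x < rho_max) ->
  forall (N : nat) (l : nat -> R) (x : R), 0 < x ->
    caputo n rho (fun y => \sum_(i < N.+1) l i * Laguerre theta beta i y) x
    = \sum_(i < N.+1) l i * Dcoef n theta beta rho i x.
Proof.
move=> _ _ _ _ rho_max_lt rho_bounds N l x x0.
have [_ rho_x_lt] := rho_bounds x x0.
have a1 : -1 < n%:R - rho x - 1 by lra.
rewrite /caputo (@Rintegral_powR_sub_lincomb _ x _ _ N.+1
  (fun i => l i * if (i < n)%N then 0 else (- beta) ^+ n)
  (fun i => Laguerre (theta + n%:R) beta (i - n))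
  (fun i => laguerre_poly (theta + n%:R) beta (i - n))) //; last 2 first.
- by move=> i t t0; rewrite Laguerre_horner.
- by move=> t t0; rewrite derive1n_Laguerre_sum.
rewrite mulr_sumr; apply: eq_bigr => i _; rewrite /Dcoef /hatLaguerre.
by case: ltnP => _; [rewrite !(mulr0, mul0r) | ring].
Qed.
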